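(* Let $R$, $D$ and $Proj:D\to P^{\neq}(\omega_2)$ be as defined in the context. Then: (1) if $r_0\ge r_1$ are both in $D$, then $Proj(r_0)\ge Proj(r_1)$ in $P^{\neq}(\omega_2)$; (2) if $r_0\in D$, $p_0=Proj(r_0)$ and $p_1\le p_0$ in $P^{\neq}(\omega_2)$, then there is $r_2\in D$ with $r_2\le r_0$ and $Proj(r_2)\le p_1$.
   Context: $P^{\neq}(\omega_2)$ is the poset of pairs $(p,n)$ where $n\in\omega$ and $p$ is a function with $dom(p)$ a finite subset of $\omega_2$ and $p(\alpha)\in{}^n\omega$ for every $\alpha\in dom(p)$, ordered by $(p_0,n_0)\ge(p_1,n_1)$ ($(p_1,n_1)$ stronger) iff $dom(p_0)\subseteq dom(p_1)$, $n_0\le n_1$, $p_0(\alpha)\subseteq p_1(\alpha)$ for every $\alpha\in dom(p_0)$, and for every $i$ with $n_0\le i<n_1$ and all $\beta\neq\alpha$ in $dom(p_0)$, $p_1(\beta)(i)\neq p_1(\alpha)(i)$. $R$ is the set of functions $r$ with $dom(r)$ a finite subset of $(\omega_2\times 2)\cup\{\omega_2\}$ such that $r(\alpha,0)\in{}^{<\omega}\omega$ whenever $(\alpha,0)\in dom(r)$, $r(\alpha,1)\in\omega$ whenever $(\alpha,1)\in dom(r)$, and (if $\omega_2\in dom(r)$) $r(\omega_2)$ is a finite partial function from ${}^{<\omega}\omega$ to $\omega$ which is one-to-one on each ${}^n\omega$. $R$ is ordered by $r_0\ge r_1$ iff $dom(r_0)\subseteq dom(r_1)$, $r_0(\alpha,0)\subseteq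 r_1(\alpha,0)$, $r_0(\alpha,1)=r_1(\alpha,1)$ and $r_0(\omega_2)\subseteq r_1(\omega_2)$ whenever these are defined for $r_0$. $D$ is the set of $r\in R$ such that $\omega_2\in dom(r)$, there is at least one $\alpha$ with $(\alpha,0)\in dom(r)$, $(\alpha,0)\in dom(r)$ iff $(\alpha,1)\in dom(r)$, and there is $n_r\in\omega$ such that the $r(\alpha,0)$ (for $(\alpha,0)\in dom(r)$) are pairwise distinct elements of ${}^{n_r}\omega$, $r(\alpha,1)\le n_r$, and $dom(r(\omega_2))=\{\sigma\in{}^{<\omega}\omega:\exists\alpha\ \sigma\subseteq r(\alpha,0)\}$. For $r\in D$, $Proj(r)=(p,n_r)$ where $dom(p)=\{\alpha:(\alpha,0)\in dom(r)\}$ and for $\alpha\in dom(p)$ and $n<n_r$: $p(\alpha)(n)=r(\alpha,0)(n)$ if $n<r(\alpha,1)$, and $p(\alpha)(n)=r(\omega_2)(r(\alpha,0)\restriction(n+1))$ if $r(\alpha,1)\le n<n_r$. *)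

From HB Require Import structures.
From mathcomp Require Import all_boot all_order.
From mathcomp Require Import finmap.
Set Implicit Arguments. Unset Strict Implicit. Unset Printing Implicit Defensive.
Local Open Scope fmap_scope.
Local Open Scope fset_scope.

(* The index set omega_2 is abstracted as an arbitrary choiceType I.  ^{<omega}omega = seq nat, ^n omega = sequences of size n.
   "s subset t" for finite sequences (as functions) is [prefix s t]. *)

Section Forcing.
Variable I : choiceType.

Definition Pcond := ({fmap I -> seq nat} * nat)%type.

Definition inP (q : Pcond) : Prop :=
  forall a v, q.1.[? a] = Some v -> size v = q.2.

(* P_le q1 q0  :  q1 <= q0, i.e. q0 >= q1 (q1 stronger) *)
Definition P_le (q1 q0 : Pcond) : Prop :=
  [/\ (forall a v, q0.1.[? a] = Some v ->
         exists2 w, q1.1.[? a] = Some w & prefix v w),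
      q0.2 <= q1.2 &
      (forall i a b va vb, q0.2 <= i < q1.2 -> a <> b ->
         q0.1.[? a] <> None -> q0.1.[? b] <> None ->
         q1.1.[? a] = Some va -> q1.1.[? b] = Some vb ->
         nth 0 vb i <> nth 0 va i)].

(* r is encoded by its three parts: r restricted to I x {0}, to I x {1},
   and the value at the extra point omega_2 (None = omega_2 not in dom r). *)
Record Rcond := MkR {
  rA : {fmap I -> seq nat};
  rB : {fmap I -> nat};
  rW : option {fmap seq nat -> nat}
}.

Definition inR (r : Rcond) : Prop :=
  forall f, rW r = Some f ->
    forall s t x, f.[? s] = Some x -> f.[? t] = Some x ->
      size s = size t -> s = t.

Definition R_le (r1 r0 : Rcond) : Prop :=
  [/\ (forall a v, (rA r0).[? a] = Some v ->
         exists2 w, (rA r1).[? a] = Some w & prefix v w),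
      (forall a v, (rB r0).[? a] = Some v -> (rB r1).[? a] = Some v) &
      (forall f0, rW r0 = Some f0 ->
         exists2 f1, rW r1 = Some f1 &
           forall s x, f0.[? s] = Some x -> f1.[? s] = Some x)].

Definition inD (r : Rcond) : Prop :=
  [/\ inR r,
      exists f, rW r = Some f,
      exists a, (rA r).[? a] <> None,
      (forall a, (rA r).[? a] <> None <-> (rB r).[? a] <> None) &
      exists n : nat,
        [/\ (forall a v, (rA r).[? a] = Some v -> size v = n),
            (forall a b v w, a <> b -> (rA r).[? a] = Some v ->
                (rA r).[? b] = Some w -> v <> w),
            (forall a k, (rB r).[? a] = Some k -> k <= n) &
            (forall f, rW r = Some f ->
               forall s, f.[? s] <> None <->
                 exists a v, (rA r).[? a] = Some v /\ prefix s v)]].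

(* n_r : the common length of the r(alpha,0) (well defined on D) *)
Definition nr (r : Rcond) : nat :=
  head 0 [seq size v | v <- (codomf (rA r) : seq _)].

Definition Proj (r : Rcond) : Pcond :=
  ([fmap a : domf (rA r) =>
      mkseq (fun n =>
        if n < odflt 0 (rB r).[? val a] then nth 0 (rA r a) n
        else odflt 0 ((odflt [fmap] (rW r)).[? take n.+1 (rA r a)]))
        (nr r)],
   nr r).

End Forcing.

From HB Require Import structures.
From mathcomp Require Import all_boot all_order.
From mathcomp Require Import finmap.
Set Implicit Arguments. Unset Strict Implicit. Unset Printing Implicit Defensive.
Local Open Scope fmap_scope.
Local Open Scope fset_scope.

(* (1) Where [Proj r0] is defined, [Proj r1] agrees with it, since [r1] extends
   [r0]; above level [nr r0] the entries of [Proj r1] are values of the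
   levelwise injective [r1(omega_2)] at nodes whose restrictions to level
   [nr r0] are the distinct [r0(alpha,0)], so distinct coordinates differ there.
   (2) Given [p1 <= Proj r0] of height [n1], prolong each [r0(alpha,0)] by the
   letters of [p1(alpha)] above [nr r0], start each new coordinate with
   [p1(alpha)] itself (with [r(alpha,1) = n1]), and append a last letter coding
   [alpha] injectively.  Nodes already labelled keep their label, nodes read by
   [Proj] above level [nr r0] are labelled by their last letter, and all others
   get fresh values.  Then [Proj] of the new condition is [p1] followed by the
   codes; the labelling is injective on levels because [p1] separates old
   coordinates above [nr r0] and the codes separate the top level. *)

Lemma fnd_fmap_in (K : choiceType) V (A : {fset K}) (G : A -> V) k (kA : k \in A) :
  [fmap x : A => G x].[? k] = Some (G [` kA]).
Proof. by rewrite in_fnd ffunE. Qed.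

Lemma fnd_fmap (K : choiceType) V (A : {fset K}) (G : K -> V) k :
  [fmap x : A => G (val x)].[? k] = if k \in A then Some (G k) else None.
Proof.
by case: (boolP (k \in A)) => kA; [rewrite fnd_fmap_in | rewrite not_fnd].
Qed.

Section Prefix.
Variables (T : eqType) (x0 : T).
Implicit Types u v s : seq T.

Lemma nth_prefix u v i : prefix u v -> i < size u -> nth x0 u i = nth x0 v i.
Proof. by case/prefixP => w -> hi; rewrite nth_cat hi. Qed.

Lemma take_prefix u v k : prefix u v -> k <= size u -> take k u = take k v.
Proof. by case/prefixP => w -> hk; rewrite takel_cat. Qed.

Lemma prefix_takeE u v : prefix u v -> u = take (size u) v.
Proof. by rewrite prefixE => /eqP. Qed.

Lemma prefix_mkseq (F G : nat -> T) n m :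
  n <= m -> (forall i, i < n -> F i = G i) -> prefix (mkseq F n) (mkseq G m).
Proof.
move=> le_nm eqFG; rewrite /mkseq -(subnKC le_nm) iotaD map_cat.
suff -> : map F (iota 0 n) = map G (iota 0 n) by apply: prefix_prefix.
by apply/eq_in_map => i; rewrite mem_iota => /andP [_ lt_i]; apply: eqFG.
Qed.

Lemma mkseq_nthE (F : nat -> T) s :
  (forall i, i < size s -> F i = nth x0 s i) -> mkseq F (size s) = s.
Proof.
move=> eqF; rewrite -[RHS](mkseq_nth x0); apply/eq_in_map => i.
by rewrite mem_iota => /andP [_ lt_i]; apply: eqF.
Qed.

End Prefix.

Section Forcing.
Variable I : choiceType.
Implicit Types (r : Rcond I) (a b : I).

Definition wf r := odflt [fmap] (rW r).

Definition proj_entry r a (v : seq nat) n :=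
  if n < odflt 0 (rB r).[? a] then nth 0 v n else odflt 0 (wf r).[? take n.+1 v].

Lemma ProjE r a v : (rA r).[? a] = Some v ->
  (Proj r).1.[? a] = Some (mkseq (proj_entry r a v) (nr r)).
Proof.
move=> ra; have ka : a \in domf (rA r) by rewrite -fndSome ra.
by rewrite /Proj /= (fnd_fmap_in _ ka) /=; move: ra; rewrite (in_fnd ka) => -[->].
Qed.

Lemma Proj_None r a : (rA r).[? a] = None -> (Proj r).1.[? a] = None.
Proof. by move=> ra; rewrite not_fnd //=; apply/negP => ka; move: ra; rewrite in_fnd. Qed.

Lemma nrE r n : (forall a v, (rA r).[? a] = Some v -> size v = n) ->
  (exists a, (rA r).[? a] <> None) -> nr r = n.
Proof.
move=> size_n [a]; case ra: (rA r).[? a] => [v|] // _.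
have /allP : all (fun w => size w == n) (codomf (rA r)).
  by apply/allP => w /codomfP [b /size_n ->].
have : v \in enum_fset (codomf (rA r)) by apply/codomfP; exists a.
rewrite /nr; case: (enum_fset _) => [|w ws] //= _ all_n.
by apply/eqP/all_n; rewrite mem_head.
Qed.

Section DomainD.
Variables (r : Rcond I) (Dr : inD r).

Lemma inD_nr :
  [/\ forall a v, (rA r).[? a] = Some v -> size v = nr r,
      forall a b v w, a <> b -> (rA r).[? a] = Some v -> (rA r).[? b] = Some w -> v <> w,
      forall a k, (rB r).[? a] = Some k -> k <= nr r &
      forall s, (wf r).[? s] <> None <-> exists a v, (rA r).[? a] = Some v /\ prefix s v].
Proof.
case: Dr => _ [f rf] ne_rA _ [n [size_n uniq_rA le_rB dom_rW]].
rewrite (nrE size_n ne_rA) /wf rf; split=> //; exact: dom_rW rf.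
Qed.

Lemma inD_rW : rW r = Some (wf r).
Proof. by rewrite /wf; case: Dr => _ [f ->]. Qed.

Lemma inD_size a v : (rA r).[? a] = Some v -> size v = nr r.
Proof. by case: inD_nr => + _ _ _; apply. Qed.

Lemma inD_uniq a b v w :
  a <> b -> (rA r).[? a] = Some v -> (rA r).[? b] = Some w -> v <> w.
Proof. by case: inD_nr => _ + _ _; apply. Qed.

Lemma inD_rB_le a k : (rB r).[? a] = Some k -> k <= nr r.
Proof. by case: inD_nr => _ _ + _; apply. Qed.

Lemma inD_rB a v : (rA r).[? a] = Some v -> exists2 k, (rB r).[? a] = Some k & k <= nr r.
Proof.
case: Dr => _ _ _ dom_rB _ ra; have : (rB r).[? a] <> None by apply/dom_rB; rewrite ra.
by case rb: (rB r).[? a] => [k|] // _; exists k; rewrite // (inD_rB_le rb).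
Qed.

Lemma inD_rA a k : (rB r).[? a] = Some k -> exists v, (rA r).[? a] = Some v.
Proof.
case: Dr => _ _ _ dom_rB _ rb.
have : (rA r).[? a] <> None by apply/dom_rB; rewrite rb.
by case: (rA r).[? a] => [v|] // _; exists v.
Qed.

Lemma inD_wfP s : (wf r).[? s] <> None <-> exists a v, (rA r).[? a] = Some v /\ prefix s v.
Proof. by case: inD_nr. Qed.

Lemma inD_wf_take a v i : (rA r).[? a] = Some v -> exists x, (wf r).[? take i v] = Some x.
Proof.
move=> ra; have : (wf r).[? take i v] <> None.
  by apply/inD_wfP; exists a, v; split=> //; apply: prefix_take.
by case: (wf r).[? _] => [x|] // _; exists x.
Qed.

Lemma inD_wf_size s : (wf r).[? s] <> None -> size s <= nr r.
Proof. by case/inD_wfP => a [v [/inD_size <- /size_prefix]]. Qed.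

Lemma inD_wf_inj s t x :
  (wf r).[? s] = Some x -> (wf r).[? t] = Some x -> size s = size t -> s = t.
Proof. by case: Dr => inj_rW _ _ _ _; move: inj_rW => /(_ _ inD_rW); apply. Qed.

End DomainD.

Section Monotone.
Variables (r0 r1 : Rcond I).
Hypotheses (D0 : inD r0) (D1 : inD r1) (le10 : R_le r1 r0).

Lemma R_le_wf s x : (wf r0).[? s] = Some x -> (wf r1).[? s] = Some x.
Proof.
by case: le10 => _ _ /(_ _ (inD_rW D0)) [f1]; rewrite (inD_rW D1) => -[<-]; apply.
Qed.

Lemma R_le_nr : nr r0 <= nr r1.
Proof.
case: D0 => _ _ [a] + _ _; case ra: (rA r0).[? a] => [u|] // _.
case: le10 => /(_ _ _ ra) [w rw uw] _ _.
by rewrite -(inD_size D0 ra) -(inD_size D1 rw) size_prefix.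
Qed.

Lemma R_le_proj_entry a u w i :
  (rA r0).[? a] = Some u -> (rA r1).[? a] = Some w -> prefix u w ->
  i < nr r0 -> proj_entry r0 a u i = proj_entry r1 a w i.
Proof.
move=> ra rw uw lt_i; have [k rb _] := inD_rB D0 ra.
case: le10 => _ /(_ _ _ rb) rb1 _.
rewrite /proj_entry rb rb1 /=; case: ifP => _.
  by apply: nth_prefix; rewrite ?(inD_size D0 ra).
have [x ux] := inD_wf_take D0 i.+1 ra.
by rewrite -(take_prefix uw) ?(inD_size D0 ra) // ux (R_le_wf ux).
Qed.

(* Above [nr r0] both entries are values of [wf r1] at nodes of level [i.+1];
   equal values would force equal nodes, hence equal restrictions to level [nr r0]. *)
Lemma R_le_proj_entry_sep i a b u v w z : a <> b ->
  (rA r0).[? a] = Some u -> (rA r0).[? b] = Some v ->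
  (rA r1).[? a] = Some w -> (rA r1).[? b] = Some z -> prefix u w -> prefix v z ->
  nr r0 <= i < nr r1 -> proj_entry r1 b z i <> proj_entry r1 a w i.
Proof.
move=> ab ra rb rw rz uw vz /andP [le0i lti1].
have [ka rka le_ka] := inD_rB D0 ra; have [kb rkb le_kb] := inD_rB D0 rb.
case: le10 => _ le_rB _.
rewrite /proj_entry (le_rB _ _ rka) (le_rB _ _ rkb) /= !ifN -?leqNgt;
  try exact: leq_trans le0i.
have [x wx] := inD_wf_take D1 i.+1 rw; have [y zy] := inD_wf_take D1 i.+1 rz.
rewrite wx zy /= => yx; subst y.
have eq_take : take i.+1 w = take i.+1 z.
  apply: (inD_wf_inj D1 wx zy).
  by rewrite !size_takel // ?(inD_size D1 rw) ?(inD_size D1 rz).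
apply: (inD_uniq D0 ab ra rb).
rewrite (prefix_takeE uw) (prefix_takeE vz) (inD_size D0 ra) (inD_size D0 rb).
have le0i1 : nr r0 <= i.+1 by apply: leqW.
by rewrite -(take_takel w le0i1) -(take_takel z le0i1) eq_take.
Qed.

Lemma Proj_R_le : P_le (Proj r1) (Proj r0).
Proof.
case: le10 => le_rA _ _; split.
- move=> a v; case ra: (rA r0).[? a] => [u|]; last by rewrite Proj_None.
  rewrite (ProjE ra) => -[<-]; have [w rw uw] := le_rA _ _ ra.
  exists (mkseq (proj_entry r1 a w) (nr r1)); first exact: ProjE.
  by apply: prefix_mkseq R_le_nr _ => i lt_i; apply: R_le_proj_entry.
- exact: R_le_nr.
- move=> i a b va vb lti ab.
  case ra: (rA r0).[? a] => [u|]; last by rewrite Proj_None.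
  case rb: (rA r0).[? b] => [v|]; last by move=> _; rewrite Proj_None.
  move=> _ _; have [w rw uw] := le_rA _ _ ra; have [z rz vz] := le_rA _ _ rb.
  rewrite (ProjE rw) (ProjE rz) => -[<-] [<-].
  rewrite !nth_mkseq; try by case/andP: lti.
  exact: R_le_proj_entry_sep ab ra rb rw rz uw vz lti.
Qed.

End Monotone.

Section Lift.
Variables (r0 : Rcond I) (p1 : Pcond I).

Local Notation f0 := (wf r0).
Local Notation n0 := (nr r0).
Local Notation n1 := p1.2.
Local Notation A1 := (domf p1.1).

Definition row a := odflt [::] p1.1.[? a].

Definition code a := index a A1.

Definition branch a :=
  odflt (take n0 (row a)) (rA r0).[? a] ++ drop n0 (row a) ++ [:: code a].

Definition old_node (s : seq nat) := has (fun a => prefix s (branch a)) (domf (rA r0)).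

Definition last_labelled (s : seq nat) :=
  (size s == n1.+1) || (n0 < size s) && old_node s.

Definition values : seq nat :=
  (codomf f0 : seq nat) ++ flatten (codomf (rA r0)) ++ flatten (codomf p1.1).

Definition bound := (\max_(x <- values) x + size A1)%N.+1.

Definition label (s : seq nat) :=
  if f0.[? s] is Some x then x
  else if last_labelled s then last 0 s else (bound + choice.pickle s)%N.

Definition nodes := [fset take k (branch a) | a in A1, k in iota 0 n1.+2].

Definition lift := MkR [fmap a : A1 => branch (val a)]
  [fmap a : A1 => odflt n1 (rB r0).[? val a]] (Some [fmap s : nodes => label (val s)]).

Hypotheses (D0 : inD r0) (P1 : inP p1) (le10 : P_le p1 (Proj r0)).

Lemma le_n0_n1 : n0 <= n1.
Proof. by case: le10. Qed.

Lemma fnd_row a : a \in A1 -> p1.1.[? a] = Some (row a).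
Proof. by move=> ha; rewrite /row (in_fnd ha). Qed.

Lemma size_row a : a \in A1 -> size (row a) = n1.
Proof. by move=> ha; apply: P1 (fnd_row ha). Qed.

Lemma old_mem a u : (rA r0).[? a] = Some u -> a \in A1.
Proof. by move=> ra; case: le10 => /(_ _ _ (ProjE ra)) [w pw _] _ _; rewrite -fndSome pw. Qed.

Lemma row_Proj a u : (rA r0).[? a] = Some u ->
  prefix (mkseq (proj_entry r0 a u) n0) (row a).
Proof. by move=> ra; case: le10 => /(_ _ _ (ProjE ra)) [w pw uw] _ _; rewrite /row pw. Qed.

Lemma row_sep a b u v i : a <> b -> (rA r0).[? a] = Some u -> (rA r0).[? b] = Some v ->
  n0 <= i < n1 -> nth 0 (row b) i <> nth 0 (row a) i.
Proof.
move=> ab ra rb lti; case: le10 => _ _ /(_ i a b (row a) (row b) lti ab); apply;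
  by rewrite ?(ProjE ra) ?(ProjE rb) ?fnd_row // ?(old_mem ra) ?(old_mem rb).
Qed.

Lemma nth_row_code a : a \in A1 -> nth 0 (row a ++ [:: code a]) n1 = code a.
Proof. by move=> ha; rewrite nth_cat size_row // ltnn subnn. Qed.

Lemma branch_old a u : (rA r0).[? a] = Some u ->
  branch a = u ++ drop n0 (row a) ++ [:: code a].
Proof. by rewrite /branch => ->. Qed.

Lemma branch_new a : (rA r0).[? a] = None -> branch a = row a ++ [:: code a].
Proof. by rewrite /branch => ->; rewrite /= catA cat_take_drop. Qed.

Lemma prefix_branch a u : (rA r0).[? a] = Some u -> prefix u (branch a).
Proof. by move/branch_old ->; apply: prefix_prefix. Qed.

Lemma size_branch a : a \in A1 -> size (branch a) = n1.+1.
Proof.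
move=> ha; have size_a := size_row ha.
case ra: (rA r0).[? a] => [u|]; last by rewrite branch_new // size_cat size_a addn1.
rewrite (branch_old ra) !size_cat size_drop (inD_size D0 ra) size_a /=.
by rewrite addn1 addnS subnKC ?le_n0_n1.
Qed.

Lemma nth_branch a i : a \in A1 -> n0 <= i ->
  nth 0 (branch a) i = nth 0 (row a ++ [:: code a]) i.
Proof.
move=> ha le0i; case ra: (rA r0).[? a] => [u|]; last by rewrite branch_new.
rewrite (branch_old ra) -[row a in RHS](cat_take_drop n0) -catA !nth_cat.
by rewrite (inD_size D0 ra) size_takel ?size_row ?le_n0_n1 // ltnNge le0i.
Qed.

Lemma nth_branch_code a : a \in A1 -> nth 0 (branch a) n1 = code a.
Proof. by move=> ha; rewrite nth_branch ?le_n0_n1 // nth_row_code. Qed.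

Lemma code_inj : {in A1 &, injective code}.
Proof. by move=> a b ha hb; apply: index_inj. Qed.

Lemma value_lt_bound x : x \in values -> x < bound.
Proof. by move=> hx; rewrite ltnS (leq_trans _ (leq_addr _ _)) ?leq_bigmax_seq. Qed.

Lemma wf_lt_bound s x : f0.[? s] = Some x -> x < bound.
Proof.
by move=> f0s; apply: value_lt_bound; rewrite mem_cat; apply/orP; left; apply/codomfP; exists s.
Qed.

Lemma row_lt_bound a x : x \in row a -> x < bound.
Proof.
rewrite /row; case pa: p1.1.[? a] => [v|] //= xv; apply: value_lt_bound.
by rewrite !mem_cat; apply/or3P/Or33/flattenP; exists v => //; apply/codomfP; exists a.
Qed.

Lemma branch_lt_bound a x : a \in A1 -> x \in branch a -> x < bound.
Proof.
move=> ha; rewrite /branch !mem_cat => /or3P [| /mem_drop/row_lt_bound // |].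
- case ra: (rA r0).[? a] => [u|] /= => [xu | /mem_take/row_lt_bound //].
  apply: value_lt_bound; rewrite !mem_cat; apply/or3P/Or32/flattenP.
  by exists u => //; apply/codomfP; exists a.
- rewrite mem_seq1 => /eqP ->; rewrite /bound ltnS.
  by apply: leq_trans (leq_addl _ _); apply: ltnW; rewrite /code index_mem.
Qed.

Lemma nodesP s : reflect (exists2 a, a \in A1 & prefix s (branch a)) (s \in nodes).
Proof.
apply: (iffP idP) => [/imfset2P [a ha [k _ ->]] | [a ha sa]].
  by exists a => //; apply: prefix_take.
apply/imfset2P; exists a => //; exists (size s); last exact: prefix_takeE.
by rewrite mem_iota add0n ltnS -(size_branch ha) size_prefix.
Qed.

Lemma take_branch_nodes a k : a \in A1 -> take k (branch a) \in nodes.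
Proof. by move=> ha; apply/nodesP; exists a => //; apply: prefix_take. Qed.

Lemma wf_nodes s : f0.[? s] <> None -> s \in nodes.
Proof.
case/(inD_wfP D0) => a [u [ra su]]; apply/nodesP; exists a; first exact: old_mem ra.
exact: prefix_trans su (prefix_branch ra).
Qed.

Lemma last_labelled_gt s : last_labelled s -> n0 < size s.
Proof. by case/orP => [/eqP -> | /andP []]; rewrite ?ltnS ?le_n0_n1. Qed.

Lemma label_wf s x : f0.[? s] = Some x -> label s = x.
Proof. by rewrite /label => ->. Qed.

Lemma label_last s : f0.[? s] = None -> last_labelled s -> label s = last 0 s.
Proof. by rewrite /label => -> ->. Qed.

Lemma label_fresh s : f0.[? s] = None -> ~~ last_labelled s ->
  label s = (bound + choice.pickle s)%N.
Proof. by rewrite /label => -> /negPf ->. Qed.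

Lemma label_lt_bound s : s \in nodes ->
  (label s < bound) = (f0.[? s] != None) || last_labelled s.
Proof.
case/nodesP => a ha sa; rewrite /label.
case f0s: f0.[? s] => [x|] /=; first exact: wf_lt_bound f0s.
case: ifP => [/last_labelled_gt | _]; last by rewrite ltnNge leq_addr.
case: s sa {f0s} => [|y s] // /prefixP [w bw] _.
by apply: (branch_lt_bound ha); rewrite bw mem_cat; apply/orP; left; apply: mem_last.
Qed.

Lemma old_nodeP s : old_node s -> exists a u, (rA r0).[? a] = Some u /\ prefix s (branch a).
Proof. by case/hasP => a ha sa; exists a, (rA r0).[ha]; rewrite in_fnd. Qed.

Lemma last_node s a i : a \in A1 -> prefix s (branch a) -> size s = i.+1 -> n0 <= i ->
  last 0 s = nth 0 (row a ++ [:: code a]) i.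
Proof.
move=> ha sa si le0i.
by rewrite -nth_last si /= (nth_prefix 0 sa) ?si // nth_branch.
Qed.

Lemma label_branch a i : a \in A1 -> n0 <= i <= n1 ->
  (rA r0).[? a] <> None \/ i = n1 ->
  label (take i.+1 (branch a)) = nth 0 (row a ++ [:: code a]) i.
Proof.
move=> ha /andP [le0i lei1] old_or_top.
have size_s : size (take i.+1 (branch a)) = i.+1 by rewrite size_takel // size_branch.
have no_wf : f0.[? take i.+1 (branch a)] = None.
  case f0s: f0.[? _] => [x|] //.
  have : size (take i.+1 (branch a)) <= n0 by apply: (inD_wf_size D0); rewrite f0s.
  by rewrite size_s ltnNge le0i.
rewrite label_last // ?(last_node ha (prefix_take _ _) size_s) //.
rewrite /last_labelled size_s; case: old_or_top => [old | ->]; last by rewrite eqxx.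
apply/orP; right; rewrite ltnS le0i; apply/hasP; exists a; last exact: prefix_take.
by move: old; case ra: (rA r0).[? a] => [u|] // _; rewrite -fndSome ra.
Qed.

(* A last-labelled node is either a whole branch, ending with the injective
   [code], or a node of an old branch at a level in [n0, n1), where [p1]
   separates distinct coordinates. *)
Lemma last_labelled_inj s t : s \in nodes -> t \in nodes -> size s = size t ->
  last_labelled s -> last_labelled t -> last 0 s = last 0 t -> s = t.
Proof.
move=> /nodesP [a ha sa] /nodesP [b hb tb] st lls llt.
have lt0s := last_labelled_gt lls.
have [i si] : exists i, size s = i.+1.
  by exists (size s).-1; rewrite prednK // (leq_ltn_trans _ lt0s).
have ti : size t = i.+1 by rewrite -st.
have le0i : n0 <= i by rewrite -ltnS -si.
have [top | not_top] := eqVneq i n1.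
  rewrite (last_node ha sa si le0i) (last_node hb tb ti le0i) top !nth_row_code //.
  move/(code_inj ha hb) => eab.
  by rewrite (prefix_takeE sa) (prefix_takeE tb) -st eab.
have lti : i < n1 by rewrite ltn_neqAle not_top -ltnS -si -(size_branch ha) size_prefix.
have old_s : old_node s by move: lls; rewrite /last_labelled si eqSS (negPf not_top) => /andP [].
have old_t : old_node t by move: llt; rewrite /last_labelled ti eqSS (negPf not_top) => /andP [].
have [a' [u [ra' sa']]] := old_nodeP old_s; have [b' [v [rb' tb']]] := old_nodeP old_t.
have ha' := old_mem ra'; have hb' := old_mem rb'.
rewrite (last_node ha' sa' si le0i) (last_node hb' tb' ti le0i) !nth_cat !size_row // lti.
have [eab _ | /eqP nab] := eqVneq a' b'.
  by rewrite (prefix_takeE sa') (prefix_takeE tb') -st eab.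
have le0i1 : n0 <= i < n1 by rewrite le0i.
by move=> /esym /(row_sep nab ra' rb' le0i1).
Qed.

Lemma label_inj s t : s \in nodes -> t \in nodes -> size s = size t ->
  label s = label t -> s = t.
Proof.
move=> hs ht st eq_st.
have := congr1 (fun x => x < bound) eq_st; rewrite /= !label_lt_bound //.
case f0s: f0.[? s] => [x|]; case f0t: f0.[? t] => [y|] /=.
- move=> _; apply: (inD_wf_inj D0 f0s) st.
  by rewrite -(label_wf f0s) eq_st (label_wf f0t).
- move=> /esym /last_labelled_gt; rewrite -st ltnNge.
  by rewrite (inD_wf_size D0) // f0s.
- move=> /last_labelled_gt; rewrite st ltnNge.
  by rewrite (inD_wf_size D0) // f0t.
case: (boolP (last_labelled s)) => lls eq_ll.
  apply: last_labelled_inj; rewrite -?eq_ll //.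
  by rewrite -(label_last f0s lls) eq_st label_last // -eq_ll.
move: eq_st; rewrite !label_fresh -?eq_ll // => /addnI.
exact: (pcan_inj (@choice.pickleK_inv _)).
Qed.

Lemma rA_lift a : (rA lift).[? a] = if a \in A1 then Some (branch a) else None.
Proof. exact: fnd_fmap. Qed.

Lemma rB_lift a :
  (rB lift).[? a] = if a \in A1 then Some (odflt n1 (rB r0).[? a]) else None.
Proof. exact: (fnd_fmap _ (fun a => odflt n1 (rB r0).[? a])). Qed.

Lemma wf_lift s : (wf lift).[? s] = if s \in nodes then Some (label s) else None.
Proof. exact: fnd_fmap. Qed.

Lemma rA_lift_nonempty : exists a, (rA lift).[? a] <> None.
Proof.
case: D0 => _ _ [a]; case ra: (rA r0).[? a] => [u|] // _ _ _.
by exists a; rewrite rA_lift (old_mem ra).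
Qed.

Lemma nr_lift : nr lift = n1.+1.
Proof.
apply: nrE rA_lift_nonempty => a v.
by rewrite rA_lift; case: ifP => // ha [<-]; rewrite size_branch.
Qed.

Lemma inD_lift : inD lift.
Proof.
split.
- move=> _ [<-] s t x; rewrite !fnd_fmap.
  by case: ifP => // hs [<-]; case: ifP => // ht [eq_st] st; apply: label_inj.
- by eexists.
- exact: rA_lift_nonempty.
- by move=> a; rewrite rA_lift rB_lift; case: ifP.
exists n1.+1; split.
- by move=> a v; rewrite rA_lift; case: ifP => // ha [<-]; rewrite size_branch.
- move=> a b v w ab; rewrite !rA_lift; case: ifP => // ha [<-]; case: ifP => // hb [<-] vw.
  by apply: ab; apply: code_inj; rewrite // -!nth_branch_code // vw.
- move=> a k; rewrite rB_lift; case: ifP => // ha [<-].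
  case rb: (rB r0).[? a] => [k'|] /=; last exact: leqnSn.
  by rewrite leqW // (leq_trans (inD_rB_le D0 rb) le_n0_n1).
- move=> _ [<-] s; rewrite fnd_fmap; split.
    by case: ifP => // /nodesP [a ha sa] _; exists a, (branch a); rewrite rA_lift ha.
  case=> a [v []]; rewrite rA_lift; case: ifP => // ha [<-] sa.
  by rewrite ifT //; apply/nodesP; exists a.
Qed.

Lemma R_le_lift : R_le lift r0.
Proof.
split.
- move=> a u ra; exists (branch a); first by rewrite rA_lift (old_mem ra).
  exact: prefix_branch.
- move=> a k rb; have [u ra] := inD_rA D0 rb.
  by rewrite rB_lift (old_mem ra) rb.
- rewrite (inD_rW D0) => _ [<-]; eexists => // s x f0s.
  by rewrite fnd_fmap wf_nodes ?(label_wf f0s) // f0s.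
Qed.

Lemma proj_entry_lift a i : a \in A1 -> i <= n1 ->
  proj_entry lift a (branch a) i = nth 0 (row a ++ [:: code a]) i.
Proof.
move=> ha lei1; have rwa : (rA lift).[? a] = Some (branch a) by rewrite rA_lift ha.
case ra: (rA r0).[? a] => [u|].
  have [k rb le_k] := inD_rB D0 ra.
  have [lt_i0 | le0i] := ltnP i n0.
    rewrite -(R_le_proj_entry D0 inD_lift R_le_lift ra rwa (prefix_branch ra) lt_i0).
    rewrite nth_cat size_row // (leq_trans lt_i0 le_n0_n1).
    by rewrite -(nth_prefix 0 (row_Proj ra)) ?size_mkseq // nth_mkseq.
  rewrite /proj_entry rB_lift ha rb /= ltnNge (leq_trans le_k le0i) /=.
  rewrite wf_lift take_branch_nodes //= label_branch ?le0i //; by left; rewrite ra.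
have rb : (rB r0).[? a] = None.
  by case rb: (rB r0).[? a] => [k|] //; have [v] := inD_rA D0 rb; rewrite ra.
rewrite /proj_entry rB_lift ha rb /=; case: ifP => [_ | /negbT]; first by rewrite branch_new.
rewrite -leqNgt => le1i; have ei : i = n1 by apply/eqP; rewrite eqn_leq lei1 le1i.
rewrite wf_lift take_branch_nodes //= ei; apply: label_branch => //; last by right.
by rewrite le_n0_n1 leqnn.
Qed.

Lemma Proj_lift a : a \in A1 -> (Proj lift).1.[? a] = Some (row a ++ [:: code a]).
Proof.
move=> ha; rewrite (ProjE (_ : _ = Some (branch a))) ?rA_lift ?ha // nr_lift.
have -> : n1.+1 = size (row a ++ [:: code a]) by rewrite size_cat size_row ?addn1.
congr Some; apply: mkseq_nthE => i; rewrite size_cat size_row // addn1 ltnS.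
exact: proj_entry_lift.
Qed.

Lemma P_le_lift : P_le (Proj lift) p1.
Proof.
have nr_Proj : (Proj lift).2 = n1.+1 := nr_lift.
split; rewrite ?nr_Proj //.
- move=> a v pa; have ha : a \in A1 by rewrite -fndSome pa.
  exists (row a ++ [:: code a]); first exact: Proj_lift.
  by rewrite /row pa; apply: prefix_prefix.
- move=> i a b va vb; rewrite ltnS -eqn_leq => /eqP <- ab pa pb.
  have ha : a \in A1 by rewrite -fndSome; case: p1.1.[? a] pa.
  have hb : b \in A1 by rewrite -fndSome; case: p1.1.[? b] pb.
  rewrite !Proj_lift // => -[<-] [<-]; rewrite !nth_row_code //.
  by move/(code_inj hb ha) => ba; apply: ab.
Qed.

End Lift.
End Forcing.

Theorem claim3 (I : choiceType) :
  (forall r0 r1 : Rcond I, inD r0 -> inD r1 -> R_le r1 r0 ->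
     P_le (Proj r1) (Proj r0)) /\
  (forall (r0 : Rcond I) (p1 : Pcond I), inD r0 -> inP p1 ->
     P_le p1 (Proj r0) ->
     exists r2 : Rcond I, [/\ inD r2, R_le r2 r0 & P_le (Proj r2) p1]).
Proof.
split=> [r0 r1 D0 D1 le10 | r0 p1 D0 P1 le10]; first exact: Proj_R_le.
by exists (lift r0 p1); split; [exact: inD_lift | exact: R_le_lift | exact: P_le_lift].
Qed.
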